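(* Let $\Phi = \{\xi = (\tau_L,\delta_L,\tau_R,\delta_R) \in \mathbb{R}^4 : \tau_L > |\delta_L + 1|,\ \tau_R < -|\delta_R+1|\}$, $\alpha(\xi) = \tau_L\tau_R + (\delta_L - 1)(\delta_R - 1)$, and $$g(\xi) = \left(\tau_R^2 - 2\delta_R,\ \delta_R^2,\ \tau_L\tau_R - \delta_L - \delta_R,\ \delta_L\delta_R\right).$$ If $\xi \in \Phi$ and $\alpha(\xi) < 0$, then $g(\xi) \in \Phi$. *)

From Stdlib Require Import Reals.
Open Scope R_scope.

Definition R4 : Type := (R * R * R * R)%type.

Definition Phi (xi : R4) : Prop :=
  let '(tL, dL, tR, dR) := xi in
  tL > Rabs (dL + 1) /\ tR < - Rabs (dR + 1).

Definition alpha (xi : R4) : R :=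
  let '(tL, dL, tR, dR) := xi in
  tL * tR + (dL - 1) * (dR - 1).

Definition g (xi : R4) : R4 :=
  let '(tL, dL, tR, dR) := xi in
  (tR ^ 2 - 2 * dR, dR ^ 2, tL * tR - dL - dR, dL * dR).

(* With [g xi = (tL', dL', tR', dR')]: the first condition of [Phi] for [g xi]
   amounts to [(dR + 1)^2 < tR^2].  The second one splits into
   [tR' + (dL' + 1) < 0], which is exactly [alpha xi < 0] since
   [(dL - 1)(dR - 1) = dL dR - dL - dR + 1], and [tR' - (dL' + 1) < 0], i.e.
   [tL tR < (dL + 1)(dR + 1)], which holds because
   [tL (-tR) > |dL + 1| |dR + 1|]. *)
From Stdlib Require Import Reals Lra.
Open Scope R_scope.

Lemma Rabs_sqr_add1_lt (t d : R) :
  Rabs (d + 1) < Rabs t -> Rabs (d ^ 2 + 1) < t ^ 2 - 2 * d.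
Proof.
  intros Hlt.
  assert (Hsq : Rsqr (d + 1) < Rsqr t) by now apply Rsqr_lt_abs_1.
  unfold Rsqr in Hsq.
  rewrite Rabs_right by (pose proof (pow2_ge_0 d); lra).
  lra.
Qed.

Lemma Rmult_lt_Ropp_Rabs_mult (a b x y : R) :
  Rabs x < a -> b < - Rabs y -> a * b < - Rabs (x * y).
Proof.
  intros Hx Hy.
  rewrite Rabs_mult.
  assert (Hprod : Rabs x * Rabs y < a * - b).
  { apply Rmult_le_0_lt_compat; try apply Rabs_pos; lra. }
  lra.
Qed.

Theorem proposition4p3 (xi : R4) :
  Phi xi -> alpha xi < 0 -> Phi (g xi).
Proof.
  destruct xi as [[[tL dL] tR] dR]; simpl.
  intros [HL HR] Halpha.
  assert (HtR : tR < 0) by (pose proof (Rabs_pos (dR + 1)); lra).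
  split.
  - apply Rabs_sqr_add1_lt.
    rewrite (Rabs_left tR HtR); lra.
  - assert (Hprod : tL * tR < - Rabs ((dL + 1) * (dR + 1)))
      by now apply Rmult_lt_Ropp_Rabs_mult.
    pose proof (Rle_abs (- ((dL + 1) * (dR + 1)))) as Hneg.
    rewrite Rabs_Ropp in Hneg.
    assert (Habs : Rabs (dL * dR + 1) < - (tL * tR - dL - dR))
      by (apply Rabs_def1; lra).
    lra.
Qed.
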